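(* Fix $l,r>0$, $0<\alpha<\beta<1$ and $\delta\in(-1,1)$, and let $A_M=l+\frac{\alpha}{1-\beta}r$. Then for every $Q_0\in\mathbb{R}$ the functions $A\mapsto G_1(Q_0,A,\delta)$ and $A\mapsto G_2(Q_0,A,\delta)$ are continuous on $(0,A_M)$. Moreover, on $(0,A_M)$ one has $\partial_A N>0$ and $\partial_A B<0$.
   Context: With $\delta=\frac{D_2-D_1}{D_2+D_1}$ for diffusion constants $D_1,D_2>0$, for $Q_0\in\mathbb{R}$ and $A>0$ define $B=B(A)=\frac{1-\beta}{\alpha}(l-A)+r$, $S_a=\sqrt{Q_0^2+A^2}$, $S_b=\sqrt{Q_0^2+B^2}$, $N=N(A)=A-l+S_a-S_b$, and $G_1(Q_0,A,\delta)=\delta\Big(\ln\frac{S_a+\delta Q_0}{S_b+\delta Q_0}+\ln\frac{l}{r}\Big)-(1+\delta)\ln\frac{A}{B}+\ln\frac{S_a-Q_0}{S_b-Q_0}$, $G_2(Q_0,A,\delta)=\delta Q_0\ln\frac{S_a+\delta Q_0}{S_b+\delta Q_0}-N$. (These arise from the zero-current Poisson–Nernst–Planck problem for two ion species with valences $\pm1$: $l,r$ are boundary concentrations, $Q_2=2Q_0$ is the permanent charge on $(a,b)\subset(0,1)$, $\alpha=H(a)/H(1)$, $\beta=H(b)/H(1)$ with $H(x)=\int_0^x ds/h(s)$, $h>0$ the cross-sectional area.) *)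

From Stdlib Require Import Reals.
Open Scope R_scope.

Definition Bfun (l r alpha beta A : R) : R := (1 - beta) / alpha * (l - A) + r.
Definition Sa (Q0 A : R) : R := sqrt (Q0 ^ 2 + A ^ 2).
Definition Sb (l r alpha beta Q0 A : R) : R := sqrt (Q0 ^ 2 + (Bfun l r alpha beta A) ^ 2).
Definition Nfun (l r alpha beta Q0 A : R) : R :=
  A - l + Sa Q0 A - Sb l r alpha beta Q0 A.

Definition G1 (l r alpha beta Q0 A delta : R) : R :=
  let B := Bfun l r alpha beta A in
  let sa := Sa Q0 A in
  let sb := Sb l r alpha beta Q0 A in
  delta * (ln ((sa + delta * Q0) / (sb + delta * Q0)) + ln (l / r))
  - (1 + delta) * ln (A / B)
  + ln ((sa - Q0) / (sb - Q0)).

Definition G2 (l r alpha beta Q0 A delta : R) : R :=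
  let sa := Sa Q0 A in
  let sb := Sb l r alpha beta Q0 A in
  delta * Q0 * ln ((sa + delta * Q0) / (sb + delta * Q0))
  - Nfun l r alpha beta Q0 A.

(** Since [|Q0| < sqrt (Q0^2 + x^2)] whenever [x <> 0], every quantity
    [sqrt (Q0^2 + x^2) + d Q0] with [|d| <= 1] is positive.  On [(0, A_M)] both
    [A] and [B] are positive, so all logarithms in [G1] and [G2] (with
    [d = δ] and [d = -1]) have positive arguments, and continuity follows by
    composition.  [B] is affine with slope [-(1-β)/α < 0], and
    [N' = 1 + A/S_a + (1-β)/α * B/S_b] is a sum of positive terms. *)

From Pilot Require Import Defs.
From Stdlib Require Import Reals Lra.
From Coquelicot Require Import Coquelicot.
Open Scope R_scope.
Set Bullet Behavior "Strict Subproofs".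

Lemma Rabs_lt_sqrt_add_sq (q x : R) : x <> 0 -> Rabs q < sqrt (q ^ 2 + x ^ 2).
Proof.
  intros hx.
  rewrite <- sqrt_Rsqr_abs.
  apply sqrt_lt_1; [apply Rle_0_sqr | |].
  - apply Rplus_le_le_0_compat; apply pow2_ge_0.
  - pose proof (pow2_gt_0 x hx). unfold Rsqr. nra.
Qed.

Lemma sqrt_add_sq_add_mul_pos (q x d : R) :
  x <> 0 -> -1 <= d <= 1 -> 0 < sqrt (q ^ 2 + x ^ 2) + d * q.
Proof.
  intros hx hd.
  pose proof (Rabs_lt_sqrt_add_sq q x hx) as hq.
  destruct (Rle_or_lt 0 q).
  - rewrite Rabs_right in hq by lra. nra.
  - rewrite Rabs_left in hq by lra. nra.
Qed.

Lemma sqrt_add_sq_pos (q x : R) : x <> 0 -> 0 < sqrt (q ^ 2 + x ^ 2).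
Proof.
  intros hx.
  pose proof (Rabs_lt_sqrt_add_sq q x hx). pose proof (Rabs_pos q). lra.
Qed.

Lemma derivable_pt_lim_sqrt_add_sq (q : R) (f : R -> R) (x df : R) :
  f x <> 0 -> derivable_pt_lim f x df ->
  derivable_pt_lim (fun y => sqrt (q ^ 2 + f y ^ 2)) x
    (f x * df / sqrt (q ^ 2 + f x ^ 2)).
Proof.
  intros hfx hf.
  assert (hsum : 0 < q ^ 2 + f x ^ 2).
  { apply Rplus_le_lt_0_compat; [apply pow2_ge_0 | apply pow2_gt_0, hfx]. }
  pose proof (Rgt_not_eq _ _ (sqrt_add_sq_pos q (f x) hfx)) as hS.
  assert (houter : is_derive (fun u => sqrt (q ^ 2 + u ^ 2)) (f x)
                     (f x / sqrt (q ^ 2 + f x ^ 2))).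
  { auto_derive; simpl in hsum |- *; [exact hsum | field; exact hS]. }
  apply is_derive_Reals.
  replace (f x * df / sqrt (q ^ 2 + f x ^ 2))
    with (scal df (f x / sqrt (q ^ 2 + f x ^ 2))).
  - exact (is_derive_comp _ _ x _ _ houter (proj2 (is_derive_Reals _ _ _) hf)).
  - unfold scal; simpl; unfold mult; simpl. field. exact hS.
Qed.

Lemma continuity_pt_ln_div (f g : R -> R) (x : R) :
  continuity_pt f x -> continuity_pt g x -> 0 < f x -> 0 < g x ->
  continuity_pt (fun y => ln (f y / g y)) x.
Proof.
  intros hf hg hfx hgx.
  apply (continuity_pt_comp (fun y => f y / g y) ln).
  - apply continuity_pt_div; [exact hf | exact hg | lra].
  - apply derivable_continuous_pt.
    exists (/ (f x / g x)). apply derivable_pt_lim_ln, Rdiv_lt_0_compat; assumption.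
Qed.

Lemma derivable_pt_lim_continuity_pt (f : R -> R) (x df : R) :
  derivable_pt_lim f x df -> continuity_pt f x.
Proof. intros hf. apply derivable_continuous_pt. exists df. exact hf. Qed.

Section Profiles.

Variables l r alpha beta : R.
Hypotheses (ha : 0 < alpha) (hb : beta < 1).

Local Notation B := (Bfun l r alpha beta).
Local Notation Sb := (Sb l r alpha beta).
Local Notation k := ((1 - beta) / alpha).

Lemma Bfun_slope_pos : 0 < k.
Proof. apply Rdiv_lt_0_compat; lra. Qed.

Lemma Bfun_pos (A : R) : A < l + alpha / (1 - beta) * r -> 0 < B A.
Proof.
  intros hA.
  replace (B A) with (k * (l + alpha / (1 - beta) * r - A))
    by (unfold Bfun; field; lra).
  apply Rmult_lt_0_compat; [exact Bfun_slope_pos | lra].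
Qed.

Lemma Bfun_derivable (A : R) : derivable_pt_lim B A (- k).
Proof. apply is_derive_Reals. unfold Bfun. auto_derive; [exact I | ring]. Qed.

Lemma Sa_derivable (Q0 A : R) : A <> 0 -> derivable_pt_lim (Sa Q0) A (A / Sa Q0 A).
Proof.
  intros hA.
  replace (A / Sa Q0 A) with (id A * 1 / sqrt (Q0 ^ 2 + id A ^ 2))
    by (unfold id, Sa; field; apply Rgt_not_eq, sqrt_add_sq_pos, hA).
  exact (derivable_pt_lim_sqrt_add_sq Q0 id A 1 hA (derivable_pt_lim_id A)).
Qed.

Lemma Sb_derivable (Q0 A : R) :
  B A <> 0 -> derivable_pt_lim (Sb Q0) A (B A * - k / Sb Q0 A).
Proof.
  intros hB.
  exact (derivable_pt_lim_sqrt_add_sq Q0 B A (- k) hB (Bfun_derivable A)).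
Qed.

Lemma Nfun_derivable (Q0 A : R) : A <> 0 -> B A <> 0 ->
  derivable_pt_lim (Nfun l r alpha beta Q0) A (1 + A / Sa Q0 A + k * B A / Sb Q0 A).
Proof.
  intros hA hB.
  replace (1 + A / Sa Q0 A + k * B A / Sb Q0 A)
    with (1 - 0 + A / Sa Q0 A - B A * - k / Sb Q0 A) by (unfold Rdiv; ring).
  exact (derivable_pt_lim_minus _ _ A _ _
           (derivable_pt_lim_plus _ _ A _ _
              (derivable_pt_lim_minus _ _ A _ _
                 (derivable_pt_lim_id A) (derivable_pt_lim_const l A))
              (Sa_derivable Q0 A hA))
           (Sb_derivable Q0 A hB)).
Qed.

Lemma Nfun_derivative_pos (Q0 A : R) : 0 < A -> 0 < B A ->
  0 < 1 + A / Sa Q0 A + k * B A / Sb Q0 A.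
Proof.
  intros hA hB.
  assert (hSa : 0 < Sa Q0 A) by exact (sqrt_add_sq_pos Q0 A (Rgt_not_eq _ _ hA)).
  assert (hSb : 0 < Sb Q0 A) by exact (sqrt_add_sq_pos Q0 (B A) (Rgt_not_eq _ _ hB)).
  pose proof (Rdiv_lt_0_compat _ _ hA hSa).
  pose proof (Rdiv_lt_0_compat _ _ (Rmult_lt_0_compat _ _ Bfun_slope_pos hB) hSb).
  lra.
Qed.

Local Ltac continuity_pt_by_composition :=
  repeat first
    [ apply continuity_pt_plus | apply continuity_pt_minus | apply continuity_pt_mult
    | apply continuity_pt_opp
    | apply continuity_pt_const; intros ??; reflexivity
    | apply continuity_pt_ln_div | apply continuity_pt_id
    | assumption | lra ].

Lemma G1_continuity_pt (Q0 A delta : R) : 0 < A -> 0 < B A -> -1 <= delta <= 1 ->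
  continuity_pt (fun A' => G1 l r alpha beta Q0 A' delta) A.
Proof.
  intros hA hB hd.
  apply Rgt_not_eq in hA as hA0, hB as hB0.
  pose proof (derivable_pt_lim_continuity_pt _ _ _ (Bfun_derivable A)).
  pose proof (derivable_pt_lim_continuity_pt _ _ _ (Sa_derivable Q0 A hA0)).
  pose proof (derivable_pt_lim_continuity_pt _ _ _ (Sb_derivable Q0 A hB0)).
  pose proof (sqrt_add_sq_add_mul_pos Q0 A delta hA0 hd).
  pose proof (sqrt_add_sq_add_mul_pos Q0 (B A) delta hB0 hd).
  pose proof (sqrt_add_sq_add_mul_pos Q0 A (-1) hA0 ltac:(lra)).
  pose proof (sqrt_add_sq_add_mul_pos Q0 (B A) (-1) hB0 ltac:(lra)).
  unfold G1, Sa, Defs.Sb in *; cbv zeta.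
  continuity_pt_by_composition.
Qed.

Lemma G2_continuity_pt (Q0 A delta : R) : 0 < A -> 0 < B A -> -1 <= delta <= 1 ->
  continuity_pt (fun A' => G2 l r alpha beta Q0 A' delta) A.
Proof.
  intros hA hB hd.
  apply Rgt_not_eq in hA as hA0, hB as hB0.
  pose proof (derivable_pt_lim_continuity_pt _ _ _ (Sa_derivable Q0 A hA0)).
  pose proof (derivable_pt_lim_continuity_pt _ _ _ (Sb_derivable Q0 A hB0)).
  pose proof (sqrt_add_sq_add_mul_pos Q0 A delta hA0 hd).
  pose proof (sqrt_add_sq_add_mul_pos Q0 (B A) delta hB0 hd).
  unfold G2, Sa, Defs.Sb in *; cbv zeta.
  continuity_pt_by_composition.
Qed.

End Profiles.

Theorem lemma3p4 (l r alpha beta delta : R)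
  (hl : 0 < l) (hr : 0 < r) (ha : 0 < alpha) (hab : alpha < beta) (hb : beta < 1)
  (hd : -1 < delta < 1) :
  let AM := l + alpha / (1 - beta) * r in
  (forall Q0 A : R, 0 < A < AM ->
     continuity_pt (fun A' => G1 l r alpha beta Q0 A' delta) A /\
     continuity_pt (fun A' => G2 l r alpha beta Q0 A' delta) A) /\
  (forall Q0 A : R, 0 < A < AM ->
     (exists d, derivable_pt_lim (fun A' => Nfun l r alpha beta Q0 A') A d /\ 0 < d) /\
     (exists d, derivable_pt_lim (fun A' => Bfun l r alpha beta A') A d /\ d < 0)).
Proof.
  intros AM.
  split; intros Q0 A [hA hAM]; pose proof (Bfun_pos l r alpha beta ha hb A hAM) as hB.
  - split; [apply G1_continuity_pt | apply G2_continuity_pt]; lra.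
  - split.
    + eexists. split.
      * apply Nfun_derivable; lra.
      * apply Nfun_derivative_pos; assumption.
    + exists (- ((1 - beta) / alpha)). split.
      * apply Bfun_derivable.
      * pose proof (Bfun_slope_pos alpha beta ha hb). lra.
Qed.
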